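(* Let $\mathbf d=\mathbf d(n)$ be graphical degree sequences, let $S_1, S_2 \subseteq [n]$, and let $1\le \ell<M/2$ be an integer. Assume $J(\mathbf d) = o(M-2\ell)$ as $n\to\infty$. Then \[ \mathbb P\big(e(S_1 , S_2) \ge \ell\big)\le\binom{d(S_1)}{\ell} (d(S_2))_{\ell} \left(\prod_{i=1}^{\ell} \frac{1+o(1)}{M-2i+2}\right) \le\binom{d(S_1)}{\ell} \frac{(d(S_2))_{\ell}}{(M/2)_{\ell} (2+o(1))^{\ell}}, \] where $e(S_1,S_2)$ is computed in $\mathcal G(n,\mathbf d)$.
   Context: For a sequence $\mathbf d=(d_1,\ldots,d_n)$ of nonnegative integers, $\mathcal G(n,\mathbf d)$ denotes a uniformly random simple graph on $[n]$ in which vertex $i$ has degree $d_i$; $\mathbf d$ is graphical if such a graph exists. $\Delta=\max_i d_i$, $M=\sum_i d_i$, $J(\mathbf d)$ is the sum of the $\Delta$ largest entries of $\mathbf d$, and $d(S)=\sum_{i\in S}d_i$ for $S\subseteq[n]$. For $S_1,S_2\subseteq[n]$, $e(S_1,S_2)$ is the number of edges with one end in $S_1$ and the other end in $S_2$ (when $S_1=S_2$, the number of edges induced by $S_1$). $(x)_k$ is the falling factorial. Asymptotics are as $n\to\infty$. *)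

From HB Require Import structures.
From mathcomp Require Import all_boot all_order all_algebra.
From mathcomp Require Import all_classical all_reals all_analysis.
Set Implicit Arguments. Unset Strict Implicit. Unset Printing Implicit Defensive.
Import Order.TTheory GRing.Theory Num.Theory.

Definition is_graph n (E : {set {set 'I_n}}) : bool := [forall e in E, #|e| == 2].

Definition deg n (E : {set {set 'I_n}}) (i : 'I_n) : nat := #|[set e in E | i \in e]|.

Definition has_degseq n (d : 'I_n -> nat) (E : {set {set 'I_n}}) : bool :=
  is_graph E && [forall i, deg E i == d i].

Definition graphs_deg n (d : 'I_n -> nat) : {set {set {set 'I_n}}} :=
  [set E | has_degseq d E].

Definition graphical n (d : 'I_n -> nat) : bool := graphs_deg d != finset.set0.

Definition Msum n (d : 'I_n -> nat) : nat := \sum_(i < n) d i.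
Definition Delta n (d : 'I_n -> nat) : nat := \max_(i < n) d i.
Definition dsum n (d : 'I_n -> nat) (S : {set 'I_n}) : nat := \sum_(i in S) d i.
(* J(d): sum of the Delta largest entries of d *)
Definition Jsum n (d : 'I_n -> nat) : nat :=
  \max_(A : {set 'I_n} | #|A| == Delta d) dsum d A.

Definition eS n (E : {set {set 'I_n}}) (S1 S2 : {set 'I_n}) : nat :=
  #|[set e in E | [exists u in S1, exists v in S2, e == [set u; v]]]|.

Definition prob_e_ge (R : realType) n (d : 'I_n -> nat) (S1 S2 : {set 'I_n}) (l : nat) : R :=
  (#|[set E in graphs_deg d | (l <= eS E S1 S2)%N]|%:R / #|graphs_deg d|%:R)%R.

Definition falling (R : realType) (x : R) (k : nat) : R :=
  (\prod_(i < k) (x - i%:R))%R.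

From mathcomp Require Import all_classical all_reals all_analysis.
(* Loaded after the analysis libraries so that finset's [set0], [subsetP], [setIidPr], ...
   take precedence over their classical_sets namesakes. *)
From mathcomp Require Import all_boot all_order all_algebra.
From mathcomp Require Import zify ring lra.
Import Order.TTheory GRing.Theory Num.Theory.
Import numFieldNormedType.Exports.
Set Implicit Arguments. Unset Strict Implicit. Unset Printing Implicit Defensive.

(* Count pairs (G, s) where G realises d and s is a sequence of l distinct edges of G, each
   joining S1 to S2: every graph with e(S1, S2) >= l carries at least l! such sequences.
   Requiring one more edge uv on top of a set H of required edges is controlled by the
   switching that replaces uv, xy by ux, vy: a graph containing H and uv has at least
   M - 2|H| - 4 Delta - 2 J forward switchings, while a graph containing H is the image of at
   most (d_u - deg_H u)(d_v - deg_H v) of them.  Summing over u in S1, v in S2 and iterating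
   bounds the count by |G(n,d)| (d(S1))_l (d(S2))_l / prod_(i < l) (M - 2i - 4 Delta - 2 J).
   As 4 Delta + 2 J <= 6 J = o(M - 2l), each factor is (1 + o(1)) / (M - 2i). *)

(** * Graphs and degree sequences *)

Lemma card_pairs (A B : finType) (P : A -> B -> bool) :
  #|[set t : A * B | P t.1 t.2]| = \sum_a #|[set b | P a b]|.
Proof.
rewrite -sum1dep_card -(pair_big_dep xpredT P (fun _ _ => 1)) /=.
by apply: eq_bigr => a _; rewrite sum1dep_card.
Qed.

Lemma card_pairs_in (A B : finType) (X : {set A}) (P : A -> B -> bool) :
  #|[set t : A * B | (t.1 \in X) && P t.1 t.2]| = \sum_(a in X) #|[set b | P a b]|.
Proof.
rewrite -sum1dep_card -(pair_big_dep (mem X) P (fun _ _ => 1)) /=.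
by apply: eq_bigr => a _; rewrite sum1dep_card.
Qed.

Lemma card_swap (A : finType) (X : {set A * A}) : #|[set t | (t.2, t.1) \in X]| = #|X|.
Proof. by rewrite -(card_preimset X (can_inj swap_pairK)); apply: eq_card => t; rewrite !inE. Qed.

Section Graphs.
Variable n : nat.
Implicit Types (F G H : {set {set 'I_n}}) (f : {set 'I_n}) (w : 'I_n).

Definition nbr G w := [set y | [set w; y] \in G].

Definition arcs G := [set p : 'I_n * 'I_n | [set p.1; p.2] \in G].

Definition paths2 G w := [set p : 'I_n * 'I_n | ([set w; p.1] \in G) && ([set p.1; p.2] \in G)].

Lemma is_graphP G : reflect (forall f, f \in G -> #|f| = 2) (is_graph G).
Proof. by apply: (iffP forall_inP) => gG f /gG => [/eqP|->]. Qed.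

Lemma is_graph_subset F G : F \subset G -> is_graph G -> is_graph F.
Proof. by move=> /subsetP FG /is_graphP gG; apply/is_graphP => f /FG /gG. Qed.

Lemma deg_setU1 f G w : deg (f |: G) w = ((w \in f) && (f \notin G)) + deg G w.
Proof.
rewrite /deg; have [wf|wf] /= := boolP (w \in f).
  have ->: [set e in f |: G | w \in e] = f |: [set e in G | w \in e].
    by apply/setP=> e; rewrite !inE; case: eqP => [->|].
  by rewrite cardsU1 inE wf andbT.
apply: eq_card => e; rewrite !inE; case: eqP => // ->.
by rewrite (negbTE wf) !andbF.
Qed.

Lemma deg_setD1 f G w : deg G w = ((w \in f) && (f \in G)) + deg (G :\ f) w.
Proof.
rewrite /deg (cardsD1 f [set e in G | w \in e]) inE andbC; congr (_ + _).
by apply: eq_card => e; rewrite !inE andbA.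
Qed.

Lemma deg_subset F G w : F \subset G -> deg F w <= deg G w.
Proof.
move=> /subsetP FG; apply: subset_leq_card; apply/subsetP => e.
by rewrite !inE => /andP[/FG -> ->].
Qed.

Lemma deg_setD F G w : F \subset G -> deg (G :\: F) w = deg G w - deg F w.
Proof.
move=> /subsetP FG; rewrite /deg.
have ->: [set e in G :\: F | w \in e] = [set e in G | w \in e] :\: [set e in F | w \in e].
  by apply/setP => e; rewrite !inE; case: (e \in F); case: (e \in G); case: (w \in e).
rewrite cardsD (setIidPr _) //; apply/subsetP => e.
by rewrite !inE => /andP[/FG -> ->].
Qed.

Lemma edges_at G w : is_graph G -> [set e in G | w \in e] = [set [set w; y] | y in nbr G w].
Proof.
move=> /is_graphP gG; apply/setP => e; rewrite inE; apply/andP/imsetP => [[eG we]|[y]].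
  have /eqP/cards2P [a [b [_ eab]]] := gG e eG.
  have [y ey] : exists y, e = [set w; y].
    move: we; rewrite eab in_set2 => /orP[]/eqP ->; first by exists b.
    by exists a; rewrite setUC.
  by exists y; rewrite // inE -ey.
by rewrite inE => yG ->; rewrite yG set21.
Qed.

Lemma card_nbr G w : is_graph G -> #|nbr G w| = deg G w.
Proof.
move=> gG; rewrite /deg edges_at // card_in_imset // => y1 y2; rewrite inE => y1G _ eq12.
have: y1 \in [set w; y2] by rewrite -eq12 set22.
rewrite in_set2 => /orP[/eqP y1w|/eqP //].
by move/is_graphP: gG => /(_ _ y1G); rewrite y1w setUid cards1.
Qed.

Lemma deg_sum G w : deg G w = \sum_(f in G) (w \in f).
Proof.
by rewrite /deg -sum1dep_card big_mkcondr; apply: eq_bigr => f _; case: (w \in f).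
Qed.

Lemma sum_deg G : \sum_w deg G w = \sum_(f in G) #|f|.
Proof.
under eq_bigr do rewrite deg_sum.
rewrite exchange_big; apply: eq_bigr => f _.
by rewrite -sum1_card [RHS]big_mkcond; apply: eq_bigr => w _; case: (w \in f).
Qed.

Lemma handshake G : is_graph G -> \sum_w deg G w = 2 * #|G|.
Proof.
move=> /is_graphP gG; rewrite sum_deg -sum1_card big_distrr /=.
by apply: eq_bigr => f /gG ->; rewrite muln1.
Qed.

Lemma card_arcs_sum G : is_graph G -> #|arcs G| = \sum_w deg G w.
Proof.
move=> gG; rewrite (card_pairs (fun a b => [set a; b] \in G)).
by apply: eq_bigr => w _; rewrite card_nbr.
Qed.

Lemma card_arcs G : is_graph G -> #|arcs G| = 2 * #|G|.
Proof. by move=> gG; rewrite card_arcs_sum // handshake. Qed.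

End Graphs.

Section DegreeSequence.
Variables (n : nat) (d : 'I_n -> nat).
Implicit Types (G H : {set {set 'I_n}}) (A B : {set 'I_n}).

Definition graphs_sup H := [set G in graphs_deg d | H \subset G].

Definition switch_loss := 4 * Delta d + 2 * Jsum d.

Definition forward_lb h := Msum d - (2 * h + switch_loss).

Lemma graphs_degP G :
  reflect (is_graph G /\ forall i, deg G i = d i) (G \in graphs_deg d).
Proof.
rewrite inE; apply: (iffP andP) => -[gG dG]; split => //.
  by move=> i; apply/eqP/(forallP dG).
by apply/forallP => i; rewrite dG.
Qed.

Lemma graphs_supP G H :
  reflect [/\ is_graph G, forall i, deg G i = d i & H \subset G] (G \in graphs_sup H).
Proof.
rewrite inE; apply: (iffP andP) => [[/graphs_degP[gG dG] HG] | [gG dG HG]] //.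
by split => //; apply/graphs_degP.
Qed.

Lemma graphs_sup0 : graphs_sup set0 = graphs_deg d.
Proof. by apply/setP => G; rewrite inE sub0set andbT. Qed.

Lemma graphs_sup_setU1 f H G :
  (G \in graphs_sup (f |: H)) = (G \in graphs_sup H) && (f \in G).
Proof. by rewrite !inE subUset sub1set andbA andbAC. Qed.

Lemma graphs_sup_loop (a : 'I_n) H : graphs_sup ([set a] |: H) = set0.
Proof.
apply/setP => G; rewrite in_set0; apply/negP => /graphs_supP[/is_graphP gG _ /subsetP aG].
by have := gG _ (aG _ (setU11 _ _)); rewrite cards1.
Qed.

Lemma graphs_deg_graphical G : G \in graphs_deg d -> graphical d.
Proof. by move=> GG; apply/set0Pn; exists G. Qed.

Lemma leq_Delta i : d i <= Delta d.
Proof. exact: leq_bigmax. Qed.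

Lemma Delta_le_n : graphical d -> Delta d <= n.
Proof.
case/set0Pn => G /graphs_degP [gG dG].
apply/bigmax_leqP => i _; rewrite -dG -card_nbr //.
by apply: leq_trans (max_card _) _; rewrite card_ord.
Qed.

Lemma dsum_subset A B : A \subset B -> dsum d A <= dsum d B.
Proof.
move=> /subsetP AB; rewrite /dsum [X in X <= _]big_mkcond [X in _ <= X]big_mkcond.
by apply: leq_sum => i _; case: ifP => // /AB ->.
Qed.

Lemma dsum_le_Jsum A : graphical d -> #|A| <= Delta d -> dsum d A <= Jsum d.
Proof.
move=> gd leAD.
have [B [AB cardB]] : exists B, A \subset B /\ #|B| = Delta d.
  have : Delta d - #|A| <= #|~: A|.
    by have := cardsC A; rewrite card_ord; have := Delta_le_n gd; lia.
  case/card_geqP => s [us ss sA]; exists (A :|: [set x in s]); split; first exact: subsetUl.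
  have AsI : A :&: [set x in s] = set0.
    by apply/setP => x; rewrite !inE; case xA: (x \in A) => //=; apply/negP => /sA; rewrite inE xA.
  by rewrite cardsU AsI cards0 subn0 cardsE (card_uniqP us) ss subnKC.
apply: leq_trans (dsum_subset AB) _.
by rewrite /Jsum (leq_bigmax_cond B) ?cardB.
Qed.

Lemma Delta_le_Jsum : graphical d -> Delta d <= Jsum d.
Proof.
move=> gd; have [->//|Dpos] := posnP (Delta d).
have n0 : 0 < #|'I_n| by rewrite card_ord (leq_trans Dpos (Delta_le_n gd)).
have [i Di] := bigop.eq_bigmax d n0.
have := @dsum_le_Jsum [set i] gd; rewrite /dsum big_set1 cards1 /Delta Di; apply.
by rewrite -Di.
Qed.

Lemma card_arcs_deg G : G \in graphs_deg d -> #|arcs G| = Msum d.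
Proof. by case/graphs_degP => gG dG; rewrite card_arcs_sum //; apply: eq_bigr. Qed.

Lemma card_paths2 G w : G \in graphs_deg d -> #|paths2 G w| <= Jsum d.
Proof.
move=> GG; have [gG dG] := graphs_degP _ GG.
rewrite (card_pairs (fun a b => ([set w; a] \in G) && ([set a; b] \in G))).
have -> : \sum_a #|[set b | ([set w; a] \in G) && ([set a; b] \in G)]| = dsum d (nbr G w).
  rewrite /dsum [RHS]big_mkcond; apply: eq_bigr => a _; rewrite inE.
  case: ([set w; a] \in G); first by rewrite card_nbr.
  by apply/eqP; rewrite cards_eq0; apply/eqP/setP => b; rewrite !inE.
by apply: dsum_le_Jsum (graphs_deg_graphical GG) _; rewrite card_nbr // dG leq_Delta.
Qed.

End DegreeSequence.

Lemma in_set2_nat (T : finType) (a b w : T) :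
  a != b -> (w \in [set a; b]) = (w == a) + (w == b) :> nat.
Proof.
by move=> ab; rewrite in_set2; have [->|wa] := eqVneq w a; [rewrite (negbTE ab) | case: (w == b)].
Qed.

Lemma set2_neq (T : finType) (a b : T) (B : {set T}) : a \notin B -> [set a; b] != B.
Proof. by apply: contraNneq => <-; rewrite set21. Qed.

(** * Switchings *)

Section Switching.
Variables (n : nat) (d : 'I_n -> nat) (H : {set {set 'I_n}}) (u v : 'I_n).
Implicit Types (G : {set {set 'I_n}}) (p : 'I_n * 'I_n).
Local Notation e := [set u; v].

(* The switching at p = (x, y) replaces the edges uv, xy by ux, vy.  [forward G p]: it applies
   to G and keeps H; [backward G p]: G contains ux, vy outside H, as after such a switching. *)
Definition forward G p := [&& [set p.1; p.2] \in G :\: H, p.1 \notin e, p.2 \notin e,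
  [set u; p.1] \notin G & [set v; p.2] \notin G].

Definition backward G p := ([set u; p.1] \in G :\: H) && ([set v; p.2] \in G :\: H).

Definition switch G p := [set u; p.1] |: ([set v; p.2] |: (G :\ e :\ [set p.1; p.2])).

Definition unswitch G p := G :\ [set u; p.1] :\ [set v; p.2] :|: [set e; [set p.1; p.2]].

Lemma card_backward G :
  G \in graphs_sup d H -> #|[set p | backward G p]| = (d u - deg H u) * (d v - deg H v).
Proof.
case/graphs_supP => gG dG HG; have gGH := is_graph_subset (subsetDl G H) gG.
have -> : [set p | backward G p] = setX (nbr (G :\: H) u) (nbr (G :\: H) v).
  by apply/setP => -[x y]; rewrite !inE /backward /= !inE.
by rewrite cardsX !card_nbr // !deg_setD // !dG.
Qed.

Definition blocked G := [set f in G | (f \in H) || (f :&: e != set0)].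

Lemma arcs_cover G : arcs G \subset
  [set p | forward G p] :|: arcs (blocked G) :|: paths2 G u :|: [set p | (p.2, p.1) \in paths2 G v].
Proof.
apply/subsetP => -[x y]; rewrite inE /= => xyG.
have to_blocked : [set x; y] \in H \/ x \in e \/ y \in e -> (x, y) \in arcs (blocked G).
  move=> hb; rewrite inE /= inE xyG; case: hb => [-> // | hb]; apply/orP; right.
  by apply/set0Pn; case: hb => [xe|ye]; [exists x | exists y]; rewrite in_setI ?set21 ?set22.
rewrite !in_setU.
have [xyH|xyH] := boolP ([set x; y] \in H); first by rewrite to_blocked ?orbT //; left.
have [xe|xe] := boolP (x \in e); first by rewrite to_blocked ?orbT //; right; left.
have [ye|ye] := boolP (y \in e); first by rewrite to_blocked ?orbT //; right; right.
have [uxG|uxG] := boolP ([set u; x] \in G); first by rewrite [_ \in paths2 _ _]inE /= uxG xyG !orbT.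
have [vyG|vyG] := boolP ([set v; y] \in G).
  rewrite [_ \in [set p | (p.2, p.1) \in _]]inE /= [(y, x) \in _]inE /=.
  by rewrite vyG [[set y; x]]setUC xyG !orbT.
by rewrite inE /forward /= in_setD xyH xyG xe ye uxG vyG.
Qed.

Lemma card_blocked G : G \in graphs_deg d -> #|blocked G| <= #|H| + 2 * Delta d.
Proof.
case/graphs_degP => _ dG.
have : blocked G \subset H :|: [set f in G | u \in f] :|: [set f in G | v \in f].
  apply/subsetP => f; rewrite !inE => /andP[fG /orP[-> // | /set0Pn[z]]].
  by rewrite !inE fG => /andP[zf /orP[]/eqP <-]; rewrite zf !orbT.
move/subset_leq_card/leq_trans; apply.
have := leq_Delta d u; have := leq_Delta d v; rewrite -!dG /deg.
have := leq_card_setU H [set f in G | u \in f].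
have := leq_card_setU (H :|: [set f in G | u \in f]) [set f in G | v \in f].
by case=> + _ [+ _]; lia.
Qed.

Lemma card_forward G : G \in graphs_sup d (e |: H) ->
  Msum d <= #|[set p | forward G p]| + (2 * #|H| + switch_loss d).
Proof.
case/graphs_supP => gG dG _; have GG : G \in graphs_deg d by apply/graphs_degP.
have g_blocked : is_graph (blocked G).
  by apply: is_graph_subset gG; apply/subsetP => f; rewrite inE => /andP[].
rewrite -(card_arcs_deg GG); apply: leq_trans (subset_leq_card (arcs_cover G)) _.
have := card_paths2 u GG; have := card_paths2 v GG; rewrite -card_swap.
have := card_arcs g_blocked; have := card_blocked GG.
set F := [set p | forward G p]; set P1 := paths2 G u; set P2 := [set p | _ \in paths2 G v].
have := leq_card_setU F (arcs (blocked G)); have := leq_card_setU (F :|: arcs (blocked G)) P1.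
have := leq_card_setU (F :|: arcs (blocked G) :|: P1) P2.
by rewrite /switch_loss; case=> + _ [+ _] [+ _]; lia.
Qed.

Hypotheses (uv : u != v) (eH : e \notin H).

Section OneSwitch.
Variables (G : {set {set 'I_n}}) (x y : 'I_n).
Hypotheses (GG : G \in graphs_sup d (e |: H)) (fxy : forward G (x, y)).

Let gG : is_graph G. Proof. by case/graphs_supP: GG. Qed.
Let dG i : deg G i = d i. Proof. by case/graphs_supP: GG. Qed.
Let eG : e \in G. Proof. by case/graphs_supP: GG => _ _ /subsetP; apply; rewrite setU11. Qed.
Let HG : H \subset G.
Proof. by case/graphs_supP: GG => _ _; apply: subset_trans (subsetU1 _ _). Qed.
Let xyG : [set x; y] \in G. Proof. by case/and5P: fxy; rewrite in_setD => /andP[]. Qed.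
Let xyH : [set x; y] \notin H. Proof. by case/and5P: fxy; rewrite in_setD => /andP[]. Qed.
Let uxG : [set u; x] \notin G. Proof. by case/and5P: fxy. Qed.
Let vyG : [set v; y] \notin G. Proof. by case/and5P: fxy. Qed.
Let neq_xy : x != y.
Proof. by have := is_graphP _ gG _ xyG; rewrite cards2; case: (x != y). Qed.
Let neq_ux : (u != x) && (v != x).
Proof. by case/and5P: fxy => _ + _ _ _; rewrite in_set2 negb_or ![x == _]eq_sym. Qed.
Let neq_uy : (u != y) && (v != y).
Proof. by case/and5P: fxy => _ _ + _ _; rewrite in_set2 negb_or ![y == _]eq_sym. Qed.

Lemma switch_deg w : deg (switch G (x, y)) w = deg G w.
Proof.
case/andP: neq_ux => ux vx; case/andP: neq_uy => uy vy.
have xy_e : [set x; y] \in G :\ e.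
  by rewrite !inE xyG andbT set2_neq // in_set2 negb_or !(eq_sym x) ux vx.
have ux_new : [set u; x] \notin [set v; y] |: (G :\ e :\ [set x; y]).
  by rewrite !inE (negbTE uxG) !andbF orbF set2_neq // in_set2 negb_or uv.
have vy_new : [set v; y] \notin G :\ e :\ [set x; y] by rewrite !inE (negbTE vyG) !andbF.
rewrite /switch /= !deg_setU1 (deg_setD1 e G) (deg_setD1 [set x; y] (G :\ e)).
rewrite eG xy_e (negbTE ux_new) (negbTE vy_new) !andbT !addnA; congr (_ + _).
by rewrite !in_set2_nat // addnACA.
Qed.

Lemma switch_sup : switch G (x, y) \in graphs_sup d H.
Proof.
case/andP: neq_ux => ux _; case/andP: neq_uy => _ vy.
apply/graphs_supP; split; last 1 first.
- apply/subsetP => f fH; rewrite !inE (subsetP HG f fH).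
  have f_xy : f != [set x; y] by apply: contraNneq xyH => <-.
  have fe : f != e by apply: contraNneq eH => <-.
  by rewrite f_xy fe !orbT.
- apply/is_graphP => f; rewrite !inE => /or3P[/eqP-> | /eqP-> | /andP[_ /andP[_]]].
  + by rewrite cards2 ux.
  + by rewrite cards2 vy.
  + exact: (is_graphP _ gG).
- by move=> i; rewrite switch_deg dG.
Qed.

Lemma switch_backward : backward (switch G (x, y)) (x, y).
Proof.
rewrite /backward /switch /= !in_setD !in_setU1 !eqxx orbT /= !andbT.
by rewrite (contra (subsetP HG _) uxG) (contra (subsetP HG _) vyG).
Qed.

Lemma switchK : unswitch (switch G (x, y)) (x, y) = G.
Proof.
have ux_vy : [set u; x] != [set v; y].
  by case/andP: neq_uy => uy _; rewrite set2_neq // in_set2 negb_or uv.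
apply/setP => f; rewrite /unswitch /switch /= !inE.
have [->|_] := eqVneq f e; first by rewrite eG !orbT.
have [->|_] := eqVneq f [set x; y]; first by rewrite xyG !orbT.
have [->|_] := eqVneq f [set u; x]; first by rewrite (negbTE uxG) (negbTE ux_vy).
have [->|_] := eqVneq f [set v; y]; first by rewrite (negbTE vyG).
by rewrite /= !orbF.
Qed.

End OneSwitch.

Lemma switching : #|graphs_sup d (e |: H)| * forward_lb d #|H| <=
  (d u - deg H u) * (d v - deg H v) * #|graphs_sup d H|.
Proof.
pose P := [set t | (t.1 \in graphs_sup d (e |: H)) && forward t.1 t.2].
pose Q := [set t | (t.1 \in graphs_sup d H) && backward t.1 t.2].
have P_ge : #|graphs_sup d (e |: H)| * forward_lb d #|H| <= #|P|.
  rewrite (card_pairs_in _ forward) -sum_nat_const; apply: leq_sum => G GG.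
  by rewrite /forward_lb leq_subLR addnC card_forward.
have PQ : #|P| <= #|Q|.
  rewrite -(@card_in_imset _ _ (fun t => (switch t.1 t.2, t.2)) P); last first.
    move=> [G1 [x1 y1]] [G2 [x2 y2]] /[1!inE] /= /andP[G1G f1] /[1!inE] /= /andP[G2G f2].
    by case=> eqG ex ey; rewrite -(switchK G1G f1) -(switchK G2G f2) eqG -ex -ey.
  apply/subset_leq_card/subsetP => _ /imsetP[[G [x y]] /[1!inE] /= /andP[GG fp] ->].
  by rewrite inE /= switch_sup // switch_backward.
have Q_le : #|Q| <= (d u - deg H u) * (d v - deg H v) * #|graphs_sup d H|.
  rewrite (card_pairs_in _ backward) mulnC -sum_nat_const.
  by apply/eq_leq/eq_bigr => G GG; rewrite card_backward.
exact: leq_trans P_ge (leq_trans PQ Q_le).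
Qed.

End Switching.

(** * Sequences of cross edges *)

Lemma leq_ffactl m1 m2 k : m1 <= m2 -> m1 ^_ k <= m2 ^_ k.
Proof. by move=> le12; rewrite !ffact_prod; apply: leq_prod => i _; apply: leq_sub2r. Qed.

Section Counting.
Variables (n : nat) (d : 'I_n -> nat) (S1 S2 : {set 'I_n}).
Implicit Types (G H : {set {set 'I_n}}) (f S : {set 'I_n}) (p : 'I_n * 'I_n).

Definition new_cross H p := [&& p.1 \in S1, p.2 \in S2 & [set p.1; p.2] \notin H].

(* Edges are recorded as ordered pairs (a, b) with a in S1, b in S2, so an edge inside
   S1 :&: S2 may occur twice; this only helps the lower bound [ffact_le_ncross]. *)
Fixpoint ncross k G H : nat :=
  if k is k'.+1 then
    \sum_(p | new_cross H p && ([set p.1; p.2] \in G)) ncross k' G ([set p.1; p.2] |: H)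
  else 1.

Definition nconf k H := \sum_(G in graphs_sup d H) ncross k G H.

Definition cross_edge f := [exists u in S1, exists v in S2, f == [set u; v]].

Definition covers S H := [forall f in H, [exists a in S, a \in f]].

Lemma nconfS k H : nconf k.+1 H = \sum_(p | new_cross H p) nconf k ([set p.1; p.2] |: H).
Proof.
rewrite /nconf /= (exchange_big_dep (new_cross H)) /=; last by move=> G p _ /andP[].
by apply: eq_bigr => p cp; apply: eq_bigl => G; rewrite graphs_sup_setU1 cp.
Qed.

Lemma ffact_le_ncross k G H : #|[set f in G :\: H | cross_edge f]| ^_ k <= ncross k G H.
Proof.
elim: k H => [|k IH] H /=; first by rewrite ffactn0.
set E := [set f in G :\: H | cross_edge f].
set P := [set p | new_cross H p && ([set p.1; p.2] \in G)].
have E_le_P : #|E| <= #|P|.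
  apply: leq_trans (leq_imset_card (fun p => [set p.1; p.2]) P); apply/subset_leq_card/subsetP.
  move=> f; rewrite !inE => /andP[/andP[fH fG] /exists_inP[a aS1 /exists_inP[b bS2 /eqP fab]]].
  by apply/imsetP; exists (a, b); rewrite // inE /new_cross /= aS1 bS2 -fab fH fG.
have step p : p \in P -> #|E|.-1 ^_ k <= ncross k G ([set p.1; p.2] |: H).
  rewrite inE => /andP[/and3P[pS1 pS2 pH] pG]; apply: leq_trans (IH _).
  have pE : [set p.1; p.2] \in E.
    rewrite !inE pH pG; apply/exists_inP; exists p.1 => //; apply/exists_inP; exists p.2 => //.
  suff -> : [set f in G :\: ([set p.1; p.2] |: H) | cross_edge f] = E :\ [set p.1; p.2].
    by rewrite (cardsD1 [set p.1; p.2] E) pE add1n.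
  by apply/setP => f; rewrite /E !inE negb_or -!andbA.
rewrite ffactnS; apply: leq_trans (leq_mul E_le_P (leqnn _)) _.
rewrite -sum_nat_const [X in _ <= X](eq_bigl (fun p => p \in P)) => [|p]; last by rewrite inE.
exact: leq_sum.
Qed.

Lemma card_le_sum_deg S H : covers S H -> #|H| <= \sum_(a in S) deg H a.
Proof.
move=> /forall_inP cov.
have -> : \sum_(a in S) deg H a = \sum_(f in H) #|S :&: f|.
  under eq_bigr do rewrite deg_sum.
  rewrite exchange_big; apply: eq_bigr => f _.
  rewrite -sum1_card big_mkcond [RHS]big_mkcond; apply: eq_bigr => a _.
  by rewrite inE; case: (a \in S); case: (a \in f).
rewrite -sum1_card; apply: leq_sum => f /cov /exists_inP[a aS af].
by rewrite card_gt0; apply/set0Pn; exists a; rewrite inE aS.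
Qed.

Lemma sum_residual_deg S H G : G \in graphs_sup d H -> covers S H ->
  \sum_(a in S) (d a - deg H a) <= dsum d S - #|H|.
Proof.
case/graphs_supP => _ dG HG cov.
rewrite sumnB => [|a _]; last by rewrite -dG deg_subset.
by rewrite leq_sub2l // card_le_sum_deg.
Qed.

Lemma covers0 S : covers S set0.
Proof. by apply/forall_inP => f; rewrite in_set0. Qed.

Lemma covers_setU1 S f H : [exists a in S, a \in f] -> covers S H -> covers S (f |: H).
Proof. by move=> fS /forall_inP cov; apply/forall_inP => g /setU1P[-> // | /cov]. Qed.

Lemma nconf_step H G0 : G0 \in graphs_sup d H -> covers S1 H -> covers S2 H ->
  \sum_(p | new_cross H p) #|graphs_sup d ([set p.1; p.2] |: H)| * forward_lb d #|H| <=
  (dsum d S1 - #|H|) * (dsum d S2 - #|H|) * #|graphs_sup d H|.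
Proof.
move=> G0H cov1 cov2; pose slack a := d a - deg H a.
apply: (@leq_trans
  (\sum_(p | (p.1 \in S1) && (p.2 \in S2)) slack p.1 * slack p.2 * #|graphs_sup d H|)).
  rewrite [X in _ <= X](bigID (fun p => [set p.1; p.2] \notin H)) /=.
  apply: leq_trans (leq_addr _ _).
  rewrite [X in _ <= X](eq_bigl (new_cross H)) => [|p]; last by rewrite /new_cross andbA.
  apply: leq_sum => -[a b] /and3P[/= _ _ abH].
  have [<-|ab] := eqVneq a b; last exact: switching.
  by rewrite setUid graphs_sup_loop cards0.
rewrite -big_distrl /= leq_mul2r; apply/orP; right.
rewrite -(pair_big (mem S1) (mem S2) (fun a b => slack a * slack b)) /= -big_distrlr /=.
by apply: leq_mul; apply: sum_residual_deg G0H _.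
Qed.

Lemma nconf0_ge l : #|[set G in graphs_deg d | l <= eS G S1 S2]| * l`! <= nconf l set0.
Proof.
rewrite /nconf graphs_sup0 (bigID (fun G => l <= eS G S1 S2)) /=.
apply: leq_trans (leq_addr _ _).
rewrite -sum_nat_const.
rewrite [X in X <= _](eq_bigl (fun G => (G \in graphs_deg d) && (l <= eS G S1 S2))) => [|G].
  apply: leq_sum => G /andP[_ lG]; apply: leq_trans (ffact_le_ncross _ _ _).
  by rewrite setD0 -ffactnn; apply: leq_ffactl.
by rewrite inE.
Qed.

Local Open Scope ring_scope.

Definition step_ratio (R : realFieldType) h : R :=
  ((dsum d S1 - h) * (dsum d S2 - h))%:R / (forward_lb d h)%:R.

Lemma nconf_le (R : realFieldType) k H : covers S1 H -> covers S2 H ->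
  (2 * (#|H| + k) + switch_loss d <= Msum d)%N ->
  (nconf k H)%:R <= #|graphs_sup d H|%:R * \prod_(i < k) step_ratio R (#|H| + i).
Proof.
elim: k H => [|k IH] H cov1 cov2 hk; first by rewrite big_ord0 mulr1 /nconf sum1_card.
have [/eqP GH0|/set0Pn[G0 G0H]] := boolP (graphs_sup d H == set0).
  by rewrite /nconf GH0 big_set0 cards0 mul0r.
set h := #|H|; set Pi := \prod_(i < k) step_ratio R (h.+1 + i).
have nconf_le_Pi p : new_cross H p ->
    (nconf k ([set p.1; p.2] |: H))%:R <= #|graphs_sup d ([set p.1; p.2] |: H)|%:R * Pi.
  case/and3P => p1 p2 pH; have cardH : #|[set p.1; p.2] |: H| = h.+1 by rewrite cardsU1 pH.
  rewrite /Pi -cardH; apply: IH; rewrite ?cardH.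
  - by apply: covers_setU1 cov1; apply/exists_inP; exists p.1; rewrite ?set21.
  - by apply: covers_setU1 cov2; apply/exists_inP; exists p.2; rewrite ?set22.
  - by move: hk; rewrite -/h; lia.
rewrite nconfS natr_sum; apply: le_trans (ler_sum _ nconf_le_Pi) _.
rewrite -big_distrl /= big_ord_recl /= addn0 mulrA.
have -> : \prod_(i < k) step_ratio R (h + bump 0 i) = Pi.
  by apply: eq_bigr => i _; rewrite /bump add1n addSnnS.
apply: ler_wpM2r; first by apply: prodr_ge0 => i _; apply: divr_ge0.
have fwd_lb_gt0 : (0 < forward_lb d h)%N by rewrite /forward_lb; move: hk; rewrite -/h; lia.
rewrite /step_ratio mulrA ler_pdivlMr ?ltr0n // -natr_sum -!natrM ler_nat.
by rewrite big_distrl /= mulnC; apply: nconf_step G0H cov1 cov2.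
Qed.
End Counting.

(** * Probability bounds *)

Local Open Scope classical_set_scope.
Local Open Scope ring_scope.

Lemma prob_e_ge_le (R : realType) n (d : 'I_n -> nat) (S1 S2 : {set 'I_n}) l :
  graphical d -> (2 * l + switch_loss d <= Msum d)%N ->
  prob_e_ge R d S1 S2 l <=
    ('C(dsum d S1, l))%:R * ((dsum d S2) ^_ l)%:R * \prod_(i < l) ((forward_lb d i)%:R)^-1.
Proof.
move=> gd hl.
have := @nconf_le _ d S1 S2 R l set0 (covers0 _) (covers0 _).
rewrite cards0 graphs_sup0 add0n => /(_ hl) nconf_le0.
have ratio_prod : \prod_(i < l) step_ratio d S1 S2 R (0 + i) =
    ((dsum d S1) ^_ l)%:R * ((dsum d S2) ^_ l)%:R * \prod_(i < l) ((forward_lb d i)%:R)^-1.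
  rewrite !ffact_prod !natr_prod -!big_split /=; apply: eq_bigr => i _.
  by rewrite /step_ratio add0n natrM.
rewrite /prob_e_ge ler_pdivrMr ?ltr0n ?card_gt0 //.
rewrite -(@ler_pM2r _ (l`!)%:R) ?ltr0n ?fact_gt0 //.
apply: (@le_trans _ _ (nconf d S1 S2 l set0)%:R); first by rewrite -natrM ler_nat nconf0_ge.
apply: (le_trans nconf_le0); rewrite ratio_prod -bin_ffact natrM.
by rewrite le_eqVlt; apply/orP; left; apply/eqP; ring.
Qed.

Lemma inv_sub_le (R : realFieldType) (X K L : R) :
  0 <= K -> 0 < L -> 2 * K <= L -> L + 2 <= X -> (X - K)^-1 <= (1 + 2 * K / L) / X.
Proof.
move=> K0 L0 KL LX.
have eps0 : 0 <= 2 * K / L by apply: divr_ge0; lra.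
have eps1 : 2 * K / L <= 1 by rewrite ler_pdivrMr // mul1r.
have epsL : 2 * K / L * L = 2 * K by rewrite divfK ?lt0r_neq0.
move: eps0 eps1 epsL; set eps := 2 * K / L => eps0 eps1 epsL.
have X0 : 0 < X by lra.
have XK : 0 < X - K by lra.
rewrite ler_pdivlMr // mulrC ler_pdivrMr //.
(* Since eps L = 2 K: (1 + eps) (X - K) - X = eps (X - L - 2) + (1 - eps) K + 2 eps. *)
have h1 : 0 <= eps * (X - L - 2) by apply: mulr_ge0 => //; lra.
have h2 : 0 <= (1 - eps) * K by apply: mulr_ge0; lra.
nra.
Qed.

Definition eps_err (R : realFieldType) n (d : 'I_n -> nat) l : R :=
  2 * (switch_loss d)%:R / ((Msum d)%:R - 2 * l%:R).

Lemma prob_e_ge_le_eps (R : realType) n (d : 'I_n -> nat) (S1 S2 : {set 'I_n}) l :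
  graphical d -> (2 * l < Msum d)%N -> eps_err R d l <= 1 ->
  prob_e_ge R d S1 S2 l <= ('C(dsum d S1, l))%:R * ((dsum d S2) ^_ l)%:R *
    \prod_(1 <= i < l.+1) ((1 + eps_err R d l) / ((Msum d)%:R - 2 * i%:R + 2)).
Proof.
move=> gd lM eps1.
set K : R := (switch_loss d)%:R; set L : R := (Msum d)%:R - 2 * l%:R.
have L0 : 0 < L by rewrite subr_gt0 -natrM ltr_nat.
have KL : 2 * K <= L by move: eps1; rewrite /eps_err -/K -/L ler_pdivrMr // mul1r.
have hl : (2 * l + switch_loss d <= Msum d)%N.
  rewrite -(ler_nat R) natrD natrM -/K; move: KL; rewrite /L.
  by have := ler0n R (switch_loss d); lra.
apply: (le_trans (prob_e_ge_le R S1 S2 gd hl)).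
apply: ler_wpM2l; first by rewrite mulr_ge0.
rewrite big_add1 /= big_mkord; apply: ler_prod => i _; rewrite invr_ge0 ler0n /=.
have il : (i < l)%N := ltn_ord i.
have -> : (forward_lb d i)%:R = (Msum d)%:R - 2 * i%:R - K :> R.
  by rewrite /forward_lb natrB; [rewrite natrD natrM -/K; ring | lia].
have -> : (Msum d)%:R - 2 * i.+1%:R + 2 = (Msum d)%:R - 2 * i%:R :> R.
  by rewrite -addn1 natrD; ring.
apply: inv_sub_le => //; rewrite /L.
have : i.+1%:R <= l%:R :> R by rewrite ler_nat.
by rewrite -addn1 natrD; lra.
Qed.

Lemma prod_falling (R : realType) (x eps : R) l :
  \prod_(1 <= i < l.+1) ((1 + eps) / (x - 2 * i%:R + 2)) =
  (falling (x / 2) l * (2 / (1 + eps)) ^+ l)^-1.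
Proof.
rewrite big_add1 /= big_mkord /falling.
have factor (i : 'I_l) :
    (1 + eps) / (x - 2 * i.+1%:R + 2) = (1 + eps) / 2 * (x / 2 - i%:R)^-1.
  have -> : x - 2 * i.+1%:R + 2 = 2 * (x / 2 - i%:R) by rewrite -addn1 natrD; field.
  by rewrite invfM mulrA.
under eq_bigr do rewrite factor.
rewrite big_split /= prodr_const card_ord prodfV invfM mulrC; congr (_ * _).
by rewrite -exprVn invf_div.
Qed.

Lemma eps_err_bound (R : realType) n (d : 'I_n -> nat) l :
  graphical d -> (2 * l < Msum d)%N ->
  0 <= eps_err R d l <= 12 * ((Jsum d)%:R / ((Msum d)%:R - 2 * l%:R)).
Proof.
move=> gd lM; have L0 : 0 < (Msum d)%:R - 2 * l%:R :> R by rewrite subr_gt0 -natrM ltr_nat.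
rewrite /eps_err; apply/andP; split.
  by apply: divr_ge0; [rewrite mulr_ge0 ?ler0n | exact: ltW].
rewrite mulrA ler_pM2r ?invr_gt0 //.
by rewrite -!natrM ler_nat /switch_loss; have := Delta_le_Jsum gd; lia.
Qed.

Lemma cvg0_sandwich (R : realType) (f g : nat -> R) (c : R) N :
  (forall n, (N <= n)%N -> 0 <= f n <= c * g n) ->
  g n @[n --> \oo] --> 0 -> f n @[n --> \oo] --> 0.
Proof.
move=> fg g0; apply: (@squeeze_cvgr _ _ _ _ (fun=> 0) (fun n => c * g n)).
- by exists N.
- exact: cvg_cst.
- by rewrite -(mulr0 c); apply: cvgM => //; exact: cvg_cst.
Qed.

Lemma two_div_sub_cvg0 (R : realType) (eps : nat -> R) :
  eps n @[n --> \oo] --> 0 -> 2 / (1 + eps n) - 2 @[n --> \oo] --> 0.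
Proof.
move=> eps0.
have lim : 2 / (1 + eps n) - 2 @[n --> \oo] --> (2 / (1 + 0) - 2 : R).
  apply: cvgB; last exact: cvg_cst.
  apply: cvgM; first exact: cvg_cst.
  by apply: cvgV; [rewrite addr0 oner_neq0 | apply: cvgD => //; exact: cvg_cst].
by rewrite addr0 divr1 subrr in lim.
Qed.

Theorem corollary1p8 (R : realType) (d : forall n : nat, 'I_n -> nat)
    (S1 S2 : forall n : nat, {set 'I_n}) (l : nat -> nat) :
  (exists N0 : nat, forall n : nat, (N0 <= n)%N ->
     graphical (d n) /\ (1 <= l n)%N /\ (2 * l n < Msum (d n))%N) ->
  ((Jsum (d n))%:R / ((Msum (d n))%:R - 2 * (l n)%:R) : R) @[n --> \oo] --> 0 ->
  exists eps delta : nat -> R,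
    eps n @[n --> \oo] --> 0 /\ delta n @[n --> \oo] --> 0 /\
    exists N : nat, forall n : nat, (N <= n)%N ->
      prob_e_ge R (d n) (S1 n) (S2 n) (l n)
        <= ('C(dsum (d n) (S1 n), l n))%:R * ((dsum (d n) (S2 n)) ^_ (l n))%:R
           * \prod_(1 <= i < (l n).+1) ((1 + eps n) / ((Msum (d n))%:R - 2 * i%:R + 2))
      /\
      ('C(dsum (d n) (S1 n), l n))%:R * ((dsum (d n) (S2 n)) ^_ (l n))%:R
           * \prod_(1 <= i < (l n).+1) ((1 + eps n) / ((Msum (d n))%:R - 2 * i%:R + 2))
        <= ('C(dsum (d n) (S1 n), l n))%:R * ((dsum (d n) (S2 n)) ^_ (l n))%:R
           / (falling ((Msum (d n))%:R / 2) (l n) * (2 + delta n) ^+ (l n)).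
Proof.
move=> [N0 hN0] rho0; pose eps n := eps_err R (d n) (l n).
have eps0 : eps n @[n --> \oo] --> 0.
  by apply: (cvg0_sandwich _ rho0) => n /hN0[gd [_ lM]]; apply: eps_err_bound.
exists eps, (fun n => 2 / (1 + eps n) - 2); split => //; split; first exact: two_div_sub_cvg0.
have [N1 _ eps_small] := cvgr0_norm_le _ eps0 _ ltr01.
exists (maxn N0 N1) => n; rewrite geq_max => /andP[/hN0[gd [_ lM]] /eps_small eps1].
split; first by apply: prob_e_ge_le_eps => //; apply: le_trans (ler_norm _) eps1.
by rewrite [2 + _]addrC subrK prod_falling.
Qed.
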